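(* Let $k\geq 0$ be an integer. If $F$ is a forest on $n$ vertices, then $\alpha_k(F)\geq \Big\lceil\frac{k+1}{k+2}\,n\Big\rceil$.
   Context: All graphs are finite and simple. For a graph $G$, a $k$-sparse set is a set of vertices inducing a subgraph of maximum degree at most $k$, and $\alpha_k(G)$ denotes the maximum size of a $k$-sparse set in $G$. A forest is a graph with no cycles. *)

From mathcomp Require Import all_boot.
Set Implicit Arguments. Unset Strict Implicit. Unset Printing Implicit Defensive.

Definition simple_graph (T : finType) (e : rel T) : Prop :=
  symmetric e /\ irreflexive e.

(* A cycle: a duplicate-free sequence x :: p of at least 3 vertices with
   consecutive vertices adjacent and the last adjacent to the first. *)
Definition has_cycle (T : finType) (e : rel T) : Prop :=
  exists (x : T) (p : seq T), 2 <= size p /\ uniq (x :: p) /\ cycle e (x :: p).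

Definition forest (T : finType) (e : rel T) : Prop := ~ has_cycle e.

Definition k_sparse (T : finType) (e : rel T) (k : nat) (S : {set T}) : bool :=
  [forall x in S, #|[set y in S | e x y]| <= k].

Definition alpha_k (T : finType) (e : rel T) (k : nat) : nat :=
  \max_(S : {set T} | k_sparse e k S) #|S|.

Definition ceil_div (a b : nat) : nat := (a + b.-1) %/ b.

From mathcomp Require Import all_boot zify.
Set Implicit Arguments. Unset Strict Implicit. Unset Printing Implicit Defensive.

(* Every nonempty vertex set of a forest contains a vertex w of degree at most
   1 in it.  Strengthen the claim with a degree budget c x for each vertex and
   prove, by induction on A, that some S inside A respecting the budgets has
   (k+1)|A| <= (k+2)|S| + sum_(x in A) (k - c x).  If w and its neighbour v
   both have budget left, add w to S and charge the edge wv to the budget of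
   v; otherwise remove w and its neighbours from A and add w to S, the slack
   of the exhausted budget paying for the lost neighbour.  With c = k the slack
   vanishes and S is a k-sparse set of the required size. *)

Lemma ceil_div_leq a b s : 0 < b -> a <= b * s -> ceil_div a b <= s.
Proof. by move=> b_gt0 le_a; rewrite /ceil_div -ltnS ltn_divLR //; lia. Qed.

Section Graph.
Variables (T : finType) (e : rel T).
Hypotheses (e_sym : symmetric e) (e_irr : irreflexive e).

Definition nbhd (A : {set T}) (x : T) : {set T} := [set y in A | e x y].
Definition deg_in (A : {set T}) (x : T) : nat := #|nbhd A x|.

Lemma nbhd_sub (A : {set T}) x : nbhd A x \subset A.
Proof. by apply/subsetP => y; rewrite inE => /andP[]. Qed.

Lemma deg_inS (A B : {set T}) x : A \subset B -> deg_in A x <= deg_in B x.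
Proof.
move=> sAB; apply: subset_leq_card; apply/subsetP => y.
by rewrite !inE => /andP[/(subsetP sAB) -> ->].
Qed.

Lemma k_sparseP k (S : {set T}) :
  reflect (forall x, x \in S -> deg_in S x <= k) (k_sparse e k S).
Proof. exact: forall_inP. Qed.

Lemma k_sparse_leq_alpha_k k (S : {set T}) :
  k_sparse e k S -> #|S| <= alpha_k e k.
Proof. exact: (@leq_bigmax_cond _ _ (fun S : {set T} => #|S|)). Qed.

Lemma deg_in_setU1 (S : {set T}) w x :
  w \notin S -> deg_in (w |: S) x = e x w + deg_in S x.
Proof.
move=> wS; rewrite /deg_in.
have -> : nbhd (w |: S) x = if e x w then w |: nbhd S x else nbhd S x.
  apply/setP => y; case exw: (e x w); rewrite !inE;
    by case: (eqVneq y w) => [->|]; rewrite ?exw ?(negbTE wS).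
by case: (e x w); rewrite // cardsU1 inE (negbTE wS).
Qed.

Lemma has_cycle_closing_edge x q y :
  uniq (x :: q) -> path e x q -> y \in q -> y != head x q -> e x y ->
  has_cycle e.
Proof.
move=> + + yq; case/splitPr: yq => q1 q2 uniq_q path_q y_head exy.
have cat_q : x :: q1 ++ y :: q2 = (x :: rcons q1 y) ++ q2 by rewrite -cat_rcons.
exists x, (rcons q1 y); split; last split.
- case: q1 {cat_q uniq_q path_q} y_head => [|z q1] /=; first by rewrite eqxx.
  by rewrite size_rcons.
- by move: uniq_q; rewrite cat_q cat_uniq => /andP[].
- rewrite /cycle !rcons_path last_rcons (e_sym y) exy andbT.
  by move: path_q; rewrite cat_path /= => /and3P[-> ->].
Qed.

(* A path that cannot be extended inside A must close up into a cycle. *)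
Lemma has_cycle_min_deg2 (A : {set T}) :
  A != set0 -> (forall x, x \in A -> 1 < deg_in A x) -> has_cycle e.
Proof.
case/set0Pn => x0 x0A deg2.
suff: forall x q, x \in A -> uniq (x :: q) -> path e x q -> has_cycle e.
  by move/(_ x0 [::]); apply.
move=> x q; pose n := #|T|; have [m] := ubnP (n - size q).
elim: m x q => // m IH x q size_q xA uniq_q path_q.
have [y [yA exy y_head]] : exists y, [/\ y \in A, e x y & y != head x q].
  have /card_gt1P[y1 [y2 []]] := deg2 x xA; rewrite !inE => /andP[y1A exy1].
  move=> /andP[y2A exy2]; case: (eqVneq y1 (head x q)) => [-> y2_head|].
    by exists y2; rewrite eq_sym.
  by exists y1.
have [yq|yq] := boolP (y \in x :: q).
  move: yq; rewrite inE => /predU1P[yx|]; first by rewrite yx e_irr in exy.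
  by move=> yq; apply: has_cycle_closing_edge uniq_q path_q yq y_head exy.
have uniq_yq : uniq (y :: x :: q) by rewrite cons_uniq yq.
have size_yq : (size q).+2 <= n.
  by rewrite -[_.+2]/(size (y :: x :: q)) -(card_uniqP uniq_yq) max_card.
by apply: (IH y (x :: q)) => //=; [lia | rewrite e_sym exy].
Qed.

Lemma forest_low_deg (A : {set T}) :
  forest e -> A != set0 -> exists2 w, w \in A & deg_in A w <= 1.
Proof.
move=> forest_e A_n0.
have [/exists_inP[w wA deg_w]|] := boolP [exists w in A, deg_in A w <= 1].
  by exists w.
rewrite negb_exists_in => /forall_inP deg2.
by case: forest_e; apply: (has_cycle_min_deg2 A_n0) => x /deg2; rewrite ltnNge.
Qed.

Definition deg_bounded (c : T -> nat) (S : {set T}) :=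
  forall x, x \in S -> deg_in S x <= c x.

Lemma deg_bounded_setU1 c c' (S : {set T}) w :
  w \notin S -> deg_bounded c' S -> deg_in S w <= c w ->
  (forall x, x \in S -> e x w + c' x <= c x) -> deg_bounded c (w |: S).
Proof.
move=> wS bS deg_w le_c x; rewrite deg_in_setU1 //.
case/setU1P => [->|xS]; first by rewrite e_irr.
exact: leq_trans (leq_add (leqnn _) (bS x xS)) (le_c x xS).
Qed.

Variable k : nat.

Definition has_large_bounded_subset (c : T -> nat) (A : {set T}) :=
  exists S : {set T}, [/\ S \subset A, deg_bounded c S &
    (k + 1) * #|A| <= (k + 2) * #|S| + \sum_(x in A) (k - c x)].

Lemma large_bounded_subset_delete_closed_nbhd c (A : {set T}) w :
  w \in A ->
  (k + 1) * (deg_in A w).+1 <= (k + 2) + \sum_(x in w |: nbhd A w) (k - c x) ->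
  has_large_bounded_subset c (A :\: (w |: nbhd A w)) ->
  has_large_bounded_subset c A.
Proof.
set N := w |: nbhd A w => wA budget [S [sub bS large]].
have N_A : N \subset A by rewrite subUset sub1set wA nbhd_sub.
have S_A : S \subset A := subset_trans sub (subsetDl _ _).
have S_N y : y \in S -> y \notin N.
  by move/(subsetP sub); rewrite inE => /andP[].
have S_nonadj y : y \in S -> e w y = false.
  move=> yS; apply: negbTE; apply: contra (S_N y yS) => ewy.
  by rewrite !inE (subsetP S_A y yS) ewy orbT.
have wS : w \notin S by apply: contra (S_N w) _; rewrite setU11.
exists (w |: S); split.
- by rewrite subUset sub1set wA S_A.
- apply: deg_bounded_setU1 wS bS _ _ => [|x xS].
    rewrite /deg_in (_ : nbhd S w = set0) ?cards0 //.
    by apply/setP => y; rewrite !inE; case: (boolP (y \in S)) => // /S_nonadj.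
  by rewrite e_sym S_nonadj.
- have card_N : #|N| = (deg_in A w).+1 by rewrite cardsU1 !inE e_irr andbF.
  rewrite -(cardsID N A) (setIidPr N_A) (big_setID N) (setIidPr N_A) /=.
  rewrite cardsU1 (negbTE wS) card_N.
  move: large budget; lia.
Qed.

Lemma large_bounded_subset_leaf c (A : {set T}) w v :
  w \in A -> nbhd A w = [set v] -> 0 < c w -> 0 < c v ->
  has_large_bounded_subset (fun x => c x - (x == v)) (A :\ w) ->
  has_large_bounded_subset c A.
Proof.
move=> wA N_w cw_gt0 cv_gt0 [S [sub bS large]].
have adj_w x : x \in A -> e x w = (x == v).
  by move=> xA; rewrite e_sym -in_set1 -N_w !inE xA.
have S_A : S \subset A := subset_trans sub (subsetDl _ _).
have wS : w \notin S by apply: contra (subsetP sub w) _; rewrite !inE eqxx.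
exists (w |: S); split.
- by rewrite subUset sub1set wA S_A.
- apply: deg_bounded_setU1 wS bS _ _ => [|x xS].
    by apply: leq_trans (deg_inS w S_A) _; rewrite /deg_in N_w cards1.
  rewrite adj_w ?(subsetP S_A) //.
  by case: (eqVneq x v) => [->|_]; rewrite ?subn0 // addnC subnK.
- have slack : \sum_(x in A :\ w) (k - (c x - (x == v)))
               <= \sum_(x in A :\ w) (k - c x) + 1.
    have [vA|vA] := boolP (v \in A :\ w); last first.
      rewrite (eq_bigr (fun x => k - c x)) ?leq_addr // => x xA.
      have /negbTE -> : x != v by apply: contraNneq vA => <-.
      by rewrite subn0.
    rewrite (bigD1 v vA) [X in _ <= X + _](bigD1 v vA) /= eqxx.
    under eq_bigr => x /andP[_ /negbTE ->] do rewrite subn0.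
    by rewrite addnAC leq_add2r; lia.
  rewrite (cardsD1 w A) wA (big_setD1 w wA) /= cardsU1 (negbTE wS) /=.
  move: large slack; lia.
Qed.

Lemma forest_has_large_bounded_subset c (A : {set T}) :
  forest e -> has_large_bounded_subset c A.
Proof.
move=> forest_e; have [m] := ubnP #|A|; elim: m c A => // m IH c A /ltnSE A_m.
have [->|A_n0] := eqVneq A set0.
  exists set0; rewrite sub0set cards0 big_set0 !muln0.
  by split=> // x; rewrite inE.
have [w wA deg_w] := forest_low_deg forest_e A_n0.
have smaller (B : {set T}) : B \subset A :\ w -> #|B| < m.
  move=> sBA; apply: leq_trans A_m.
  by apply: leq_ltn_trans (subset_leq_card sBA) _; rewrite (cardsD1 w A) wA.
have delete_closed_nbhd :
    (k + 1) * (deg_in A w).+1 <= k + 2 + \sum_(x in w |: nbhd A w) (k - c x) ->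
    has_large_bounded_subset c A.
  move=> budget.
  apply: large_bounded_subset_delete_closed_nbhd wA budget (IH _ _ _).
  by apply: smaller; apply: setDS; rewrite sub1set setU11.
move: deg_w; rewrite leq_eqVlt ltnS leqn0 => /orP[/cards1P[v N_w]|/eqP deg0].
  have [/andP[cw_gt0 cv_gt0]|] := boolP ((0 < c w) && (0 < c v)).
    apply: large_bounded_subset_leaf wA N_w cw_gt0 cv_gt0 _.
    exact: IH (smaller _ _).
  rewrite negb_and -!eqn0Ngt => c0; apply: delete_closed_nbhd.
  have : v \in nbhd A w by rewrite N_w set11.
  rewrite inE => /andP[_ ewv].
  have vw : v != w by apply: contraTneq ewv => ->; rewrite e_irr.
  rewrite /deg_in N_w cards1 big_setU1 ?inE 1?eq_sym // big_set1.
  by case/orP: c0 => /eqP /= ->; lia.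
by apply: delete_closed_nbhd; rewrite deg0; lia.
Qed.

End Graph.

Theorem lemma3p2 (k : nat) (T : finType) (e : rel T) :
  simple_graph e -> forest e ->
  ceil_div ((k + 1) * #|T|) (k + 2) <= alpha_k e k.
Proof.
move=> [e_sym e_irr] forest_e.
have [S [_ bS large]] :=
  forest_has_large_bounded_subset e_sym e_irr k (fun=> k) [set: T] forest_e.
have no_slack : \sum_(x in [set: T]) (k - k) = 0.
  by rewrite big1 // => x _; rewrite subnn.
have sparse : k_sparse e k S by apply/k_sparseP.
apply: leq_trans (k_sparse_leq_alpha_k sparse).
apply: ceil_div_leq; first by rewrite addn2.
by rewrite -cardsT; move: large; rewrite no_slack addn0.
Qed.
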